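(* Let $p>1$ be an integer and let $u^{(p)}$ be the fixed point of the substitution $\varphi_p(L)=L^pS$, $\varphi_p(S)=M$, $\varphi_p(M)=L^{p-1}S$. Let $v,w$ be factors of $u^{(p)}$ with $|v|=|w|$. Then $\left||v|_M-|w|_M\right|\le 2$.
   Context: $u^{(p)}=\lim_{n\to\infty}\varphi_p^n(L)$ is the unique infinite word over $\{L,S,M\}$ fixed by $\varphi_p$. A factor is a finite contiguous subword; $|w|$ is the length and $|w|_a$ the number of occurrences of the letter $a$ in $w$. *)

From HB Require Import structures.
From mathcomp Require Import all_boot.
Set Implicit Arguments. Unset Strict Implicit. Unset Printing Implicit Defensive.

Inductive letter := L | S | M.

Definition letter_eqb (a b : letter) : bool :=
  match a, b with L, L | S, S | M, M => true | _, _ => false end.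
Lemma letter_eqP : Equality.axiom letter_eqb.
Proof. by case; case; constructor. Qed.
HB.instance Definition _ := hasDecEq.Build letter letter_eqP.

Definition phi (p : nat) (a : letter) : seq letter :=
  match a with
  | L => rcons (nseq p L) S
  | S => [:: M]
  | M => rcons (nseq p.-1 L) S
  end.

Definition phiw (p : nat) (w : seq letter) : seq letter := flatten (map (phi p) w).

(* The fixed point u^(p) = lim phi_p^n(L), as an infinite word nat -> letter.
   phi_p^k(L) is a prefix of phi_p^(k+1)(L) and |phi_p^k(L)| >= k+1, so the
   n-th letter of u^(p) is the n-th letter of phi_p^(n+1)(L). *)
Definition u (p : nat) (n : nat) : letter := nth L (iter n.+1 (phiw p) [:: L]) n.

Definition factor (p i n : nat) : seq letter := [seq u p (i + j) | j <- iota 0 n].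

Definition occ (a : letter) (w : seq letter) : nat := count_mem a w.

(* Every factor of u^(p) desubstitutes: if a window [w] starts at offset [r] of phi_p(u_m)
   and its end is at offset [r'] of phi_p(u_(m+a)), then L^r w = phi_p(x) L^r' with
   x = u[m, m + a), because every proper prefix of an image phi_p(c) is a power of L.  Hence
   |w|_M = |x|_S, |w|_S = |x|_L + |x|_M and |w| + r = (p+1)|x|_L + |x|_S + p|x|_M + r'.
   So the profile of a pair of windows (length difference, differences of the S- and
   M-counts, first letters and letters following them) is determined by the profile of the
   desubstituted pair and four offsets, and desubstitution strictly shortens windows of
   length at least 3.  Closing the profiles of pairs of windows of length at most 2 under
   this rule, keeping length differences in [-7, 7], gives a finite set, computed and
   checked by reflection, in which every profile of length difference 0 has M-difference
   in [-2, 2].  Pairs whose desubstitutions differ in length by more than 7 need not be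
   considered: the profiles of length difference exactly 7 in the set show that the images
   then differ in length by more than 7.  The dependence on p only enters through offsets
   bounded by linear forms in p, evaluated exactly for p = 2 and by bounds valid for all
   p >= 3 otherwise. *)

From HB Require Import structures.
From Stdlib Require Import ZArith Lia FMapPositive.
From mathcomp Require Import all_boot zify ssrZ.
Set Implicit Arguments. Unset Strict Implicit. Unset Printing Implicit Defensive.

Lemma occ_sum s : occ L s + occ S s + occ M s = size s.
Proof. by elim: s => //= c s IH; case: c; rewrite /occ /= in IH *; lia. Qed.

Section FixedPoint.
Variable p : nat.
Hypothesis hp : 1 < p.

Lemma phiw_cat s1 s2 : phiw p (s1 ++ s2) = phiw p s1 ++ phiw p s2.
Proof. by rewrite /phiw map_cat flatten_cat. Qed.

Lemma phiw_cons c s : phiw p (c :: s) = phi p c ++ phiw p s.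
Proof. by []. Qed.

Lemma size_phi c : size (phi p c) = match c with L => p.+1 | S => 1 | M => p end.
Proof. by case: c => //=; rewrite size_rcons size_nseq // prednK // ltnW. Qed.

Lemma size_phi_gt0 c : 0 < size (phi p c).
Proof. by rewrite size_phi; case: c => //; lia. Qed.

Lemma size_phi_le c : size (phi p c) <= p.+1.
Proof. by rewrite size_phi; case: c => //; lia. Qed.

Lemma size_phiw x : size (phiw p x) = p.+1 * count_mem L x + count_mem S x + p * count_mem M x.
Proof.
elim: x => [|c x IH]; first by rewrite /= !muln0.
by rewrite phiw_cons size_cat IH size_phi; case: c => /=; lia.
Qed.

Lemma size_phiw_ge x : size x <= size (phiw p x).
Proof. by rewrite size_phiw; elim: x => //= c x IH; case: c => /=; lia. Qed.

Lemma count_phiw_M x : count_mem M (phiw p x) = count_mem S x.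
Proof.
elim: x => //= c x IH; rewrite phiw_cons count_cat IH.
by case: c => //=; rewrite -cats1 count_cat count_nseq.
Qed.

Lemma count_phiw_S x : count_mem S (phiw p x) = count_mem L x + count_mem M x.
Proof.
elim: x => //= c x IH; rewrite phiw_cons count_cat IH.
by case: c => /=; rewrite ?addn0 -?cats1 ?count_cat ?count_nseq /=; lia.
Qed.

Lemma take_phi c r : r < size (phi p c) -> take r (phi p c) = nseq r L.
Proof.
rewrite size_phi; case: c => /= hr; [|by case: r hr|].
all: rewrite -cats1 takel_cat ?size_nseq ?take_nseq; first congr nseq; lia.
Qed.

Lemma nth_phi c r : r < size (phi p c) ->
  nth L (phi p c) r = if r == (size (phi p c)).-1 then (if c is S then M else S) else L.
Proof.
rewrite size_phi; case: c => /= hr; [|by case: r hr|].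
all: rewrite nth_rcons size_nseq nth_nseq /=.
all: case: ltngtP => //; lia.
Qed.

Definition phiL k := iter k (phiw p) [:: L].

Lemma phiLS k : phiL k.+1 = phiw p (phiL k).
Proof. exact: iterS. Qed.

Lemma phiL_prefix k : exists t, phiL k.+1 = phiL k ++ t.
Proof.
elim: k => [|k [t Ht]].
  exists (drop 1 (phi p L)); rewrite /phiL /= /phiw /= cats0.
  by case: (p) hp => // q _ /=; rewrite drop0.
by exists (phiw p t); rewrite [phiL k.+2]phiLS Ht phiw_cat -phiLS -Ht.
Qed.

Lemma phiL_prefix_le k k' : k <= k' -> exists t, phiL k' = phiL k ++ t.
Proof.
move=> /subnK <-; elim: (k' - k) => [|d [t Ht]]; first by exists [::]; rewrite cats0.
by have [t' Ht'] := phiL_prefix (d + k); exists (t ++ t'); rewrite addSn Ht' Ht catA.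
Qed.

Lemma size_phiL k : k < size (phiL k).
Proof.
elim: k => // k IH; have [t Ht] := phiL_prefix_le (leq0n k).
rewrite phiLS Ht phiw_cons size_cat size_phi.
rewrite Ht /= in IH; have := size_phiw_ge t; lia.
Qed.

Lemma u_phiL k i : i < size (phiL k) -> u p i = nth L (phiL k) i.
Proof.
move=> hi; rewrite /u -/(phiL i.+1).
have [t1 H1] := phiL_prefix_le (leq_maxl k i.+1).
have [t2 H2] := phiL_prefix_le (leq_maxr k i.+1).
have hi2 : i < size (phiL i.+1) by have := size_phiL i.+1; lia.
have : nth L (phiL (maxn k i.+1)) i = nth L (phiL k) i by rewrite H1 nth_cat hi.
by rewrite H2 nth_cat hi2 => ->.
Qed.

Lemma factorD i m n : factor p i (m + n) = factor p i m ++ factor p (i + m) n.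
Proof.
rewrite /factor iotaD map_cat add0n; congr (_ ++ _).
by rewrite -{1}[m]addn0 iotaDl -map_comp; apply: eq_map => j /=; rewrite addnA.
Qed.

Lemma factor1 i : factor p i 1 = [:: u p i].
Proof. by rewrite /factor /= addn0. Qed.

Lemma take_phiL k m : m <= size (phiL k) -> take m (phiL k) = factor p 0 m.
Proof.
move=> hm; apply: (@eq_from_nth _ L); first by rewrite size_takel // size_map size_iota.
move=> t; rewrite size_takel // => htm.
rewrite nth_take // (nth_map 0) ?size_iota // nth_iota // !add0n (u_phiL (k := k)) //; lia.
Qed.

Definition img_pos m := size (phiw p (factor p 0 m)).

Lemma size_phiw1 c : size (phiw p [:: c]) = size (phi p c).
Proof. by rewrite phiw_cons cats0. Qed.

Lemma img_posS m : img_pos m.+1 = img_pos m + size (phi p (u p m)).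
Proof. by rewrite /img_pos -addn1 factorD factor1 phiw_cat size_cat size_phiw1. Qed.

Lemma img_pos_mono : {homo img_pos : m m' / m <= m'}.
Proof. by move=> m m' /subnK <-; elim: (m' - m) => // d IH; rewrite addSn img_posS; lia. Qed.

Lemma u_img_pos m r : r < size (phi p (u p m)) -> u p (img_pos m + r) = nth L (phi p (u p m)) r.
Proof.
move=> hr; have hm := size_phiL m.+1.
have e1 : phiL m.+1 = take m (phiL m.+1) ++ u p m :: drop m.+1 (phiL m.+1).
  by rewrite (u_phiL (k := m.+1)) ?(ltnW hm) // -drop_nth ?(ltnW hm) // cat_take_drop.
have e2 : phiL m.+2 = phiw p (factor p 0 m) ++ phi p (u p m) ++ phiw p (drop m.+1 (phiL m.+1)).
  by rewrite phiLS {1}e1 phiw_cat phiw_cons take_phiL //; lia.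
rewrite (u_phiL (k := m.+2)); last by rewrite e2 !size_cat -/(img_pos m); lia.
by rewrite e2 nth_cat -/(img_pos m) ltnNge leq_addr /= addKn nth_cat hr.
Qed.

Definition at_offset i m r := i = img_pos m + r /\ r < size (phi p (u p m)).

Lemma img_pos_decomp i : exists m r, at_offset i m r.
Proof.
elim: i => [|i [m [r [-> hr]]]]; first by exists 0, 0; split => //; apply: size_phi_gt0.
case: (ltnP r.+1 (size (phi p (u p m)))) => h; first by exists m, r.+1; rewrite /at_offset addnS.
exists m.+1, 0; split; last exact: size_phi_gt0.
rewrite img_posS; lia.
Qed.

(* [S] only occurs as the last letter of [phi L] and [phi M], and is always followed by
   the image of the next letter, which starts with [L] or is [M]. *)
Lemma u_SS_free m : u p m = S -> u p m.+1 != S.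
Proof.
have [m' [r [-> hr]]] := img_pos_decomp m.
rewrite u_img_pos // nth_phi //; case: eqP => [hr1|//].
have -> : (img_pos m' + r).+1 = img_pos m'.+1 + 0 by rewrite img_posS; lia.
rewrite u_img_pos ?size_phi_gt0 // nth_phi ?size_phi_gt0 // size_phi.
by case: (u p m') => //= _; case: (u p m'.+1) => //=; case: (p) hp => [|[|]].
Qed.

Lemma factor_img_pos m r :
  r <= size (phi p (u p m)) -> factor p (img_pos m) r = take r (phi p (u p m)).
Proof.
move=> hr; apply: (@eq_from_nth _ L); first by rewrite size_map size_iota size_takel.
move=> t; rewrite size_map size_iota => ht.
by rewrite (nth_map 0) ?size_iota // nth_iota // add0n u_img_pos ?nth_take //; lia.
Qed.

Lemma factor_img_pos_phiw m d :
  factor p (img_pos m) (img_pos (m + d) - img_pos m) = phiw p (factor p m d).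
Proof.
elim: d => [|d IH]; first by rewrite addn0 subnn.
rewrite addnS img_posS -addnBAC ?img_pos_mono ?leq_addr // factorD IH.
rewrite addnBA ?img_pos_mono ?leq_addr // addKn factor_img_pos // take_size.
by rewrite -addn1 factorD factor1 phiw_cat phiw_cons cats0.
Qed.

Lemma size_factor j k : size (factor p j k) = k.
Proof. by rewrite size_map size_iota. Qed.

Lemma size_phi_pair k : 3 <= size (phi p (u p k)) + size (phi p (u p k.+1)).
Proof.
move: (u_SS_free (m := k)); rewrite !size_phi.
case: (u p k) => /=; case: (u p k.+1) => //= hSS; try lia.
by have := hSS erefl.
Qed.

Lemma size_phiw_factor_gt k d : 1 < d -> d < size (phiw p (factor p k d)).
Proof.
case: d => [|[|d]] // _.
rewrite [in factor _ _ _](_ : d.+2 = 1 + (1 + d)) // !factorD !factor1 !cat1s !phiw_cons !size_cat.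
have := size_phi_pair k; have := size_phiw_ge (factor p (k + 1 + 1) d).
rewrite size_factor !addn1; move: (size (phiw _ _)) => s.
move: (size (phi p (u p k))) (size (phi p (u p k.+1))) => a b; lia.
Qed.

Lemma at_offset_le i n m r m' r' : at_offset i m r -> at_offset (i + n) m' r' -> m <= m'.
Proof.
move=> [-> _] [hin' hr']; case: (leqP m m') => // /img_pos_mono; rewrite img_posS.
have := size_phi_gt0 (u p m'); lia.
Qed.

Lemma window_decomp i n : exists m r a r', at_offset i m r /\ at_offset (i + n) (m + a) r'.
Proof.
have [m [r hi]] := img_pos_decomp i; have [m' [r' hin]] := img_pos_decomp (i + n).
by exists m, r, (m' - m), r'; rewrite subnKC // (at_offset_le hi hin).
Qed.

Section Desubstitution.
Variables (i n m a r r' : nat).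
Hypotheses (hi : at_offset i m r) (hin : at_offset (i + n) (m + a) r').

Lemma factor_desubst : nseq r L ++ factor p i n = phiw p (factor p m a) ++ nseq r' L.
Proof.
case: hi hin => hi' hr [hin' hr'].
rewrite -factor_img_pos_phiw -(take_phi hr) -(take_phi hr').
rewrite -(factor_img_pos (ltnW hr)) -(factor_img_pos (ltnW hr')).
have le_pos : img_pos m <= img_pos (m + a) by apply/img_pos_mono/leq_addr.
transitivity (factor p (img_pos m) (r + n)); first by rewrite factorD -hi'.
have -> : r + n = (img_pos (m + a) - img_pos m) + r' by lia.
by rewrite factorD (subnKC le_pos).
Qed.

Lemma size_desubst : r + n = size (phiw p (factor p m a)) + r'.
Proof. by have := congr1 size factor_desubst; rewrite !size_cat !size_nseq size_factor. Qed.

Lemma occ_desubst_M : occ M (factor p i n) = occ S (factor p m a).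
Proof.
have := congr1 (count_mem M) factor_desubst.
by rewrite !count_cat !count_nseq /= count_phiw_M ?muln0 ?addn0.
Qed.

Lemma occ_desubst_S : occ S (factor p i n) = occ L (factor p m a) + occ M (factor p m a).
Proof.
have := congr1 (count_mem S) factor_desubst.
by rewrite !count_cat !count_nseq /= count_phiw_S ?muln0 ?addn0.
Qed.

Lemma desubst_length : a <= n /\ (3 <= n -> a < n).
Proof.
have := size_desubst; case: hi => _ hr.
case: a => [|d]; first lia.
rewrite -add1n factorD factor1 cat1s phiw_cons size_cat.
have := size_phiw_ge (factor p (m + 1) d); rewrite size_factor.
have : 1 < d -> d < size (phiw p (factor p (m + 1) d)) by exact: size_phiw_factor_gt.
move: (size (phiw _ _)) hr => s; move: (size (phi p (u p m))) => b; lia.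
Qed.

End Desubstitution.

End FixedPoint.

Record profile := Profile
  { dlen : Z; dS : Z; dM : Z; head1 : letter; next1 : letter; head2 : letter; next2 : letter }.

Definition profile_tuple x := (dlen x, dS x, dM x, head1 x, next1 x, head2 x, next2 x).
Definition tuple_profile (t : Z * Z * Z * letter * letter * letter * letter) :=
  let: (k, s, m, a, b, a', b') := t in Profile k s m a b a' b'.
Lemma profile_tupleK : cancel profile_tuple tuple_profile. Proof. by case. Qed.
HB.instance Definition _ := Equality.copy profile (can_type profile_tupleK).

Definition letter_code (c : letter) : Z := match c with L => 0 | S => 1 | M => 2 end.

(* The key need not be injective: lookups compare the stored profile with the query. *)
Definition profile_key (x : profile) : positive :=
  Z.to_pos (1 + letter_code (head1 x) + 3 * (letter_code (next1 x)
    + 3 * (letter_code (head2 x) + 3 * (letter_code (next2 x)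
    + 3 * ((dM x + 20) + 41 * ((dS x + 20) + 41 * (dlen x + 20)))))))%Z.

Definition table := PositiveMap.t profile.

Definition mem_table (T : table) (x : profile) : bool :=
  if PositiveMap.find (profile_key x) T is Some y then y == x else false.

Definition table_add (T : table) (x : profile) := PositiveMap.add (profile_key x) x T.

Definition table_of (s : seq profile) : table := foldl table_add (PositiveMap.empty profile) s.

Lemma find_table_add k y T s : PositiveMap.find k (foldl table_add T s) = Some y ->
  y \in s \/ PositiveMap.find k T = Some y.
Proof.
elim: s T => [|x s IH] T /=; first by right.
move=> /IH [hy|]; first by left; rewrite inE hy orbT.
rewrite /table_add; case: (Pos.eq_dec k (profile_key x)) => [->|ne].
  by rewrite PositiveMap.gss => -[->]; left; rewrite inE eqxx.
by rewrite PositiveMap.gso //; right.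
Qed.

Lemma mem_table_of s x : mem_table (table_of s) x -> x \in s.
Proof.
rewrite /mem_table; case E: PositiveMap.find => [y|] // /eqP <-.
by have [//|] := find_table_add E; rewrite PositiveMap.gempty.
Qed.

(* An entry [(a, lo, hi)] says that every offset [r] of [phi_p c] with [lo <= r <= hi]
   carries the letter [a]; a bound [(s, t)] stands for [s * p + t]. *)
Definition block_offsets (c : letter) : seq (letter * (Z * Z) * (Z * Z)) :=
  match c with
  | L => [:: (L, (0, 0), (1, -1)); (S, (1, 0), (1, 0))]
  | S => [:: (M, (0, 0), (0, 0))]
  | M => [:: (L, (0, 0), (1, -2)); (S, (1, -1), (1, -1))]
  end%Z.

Definition zadd (x y : Z * Z) : Z * Z := (x.1 + y.1, x.2 + y.2)%Z.
Definition zsub (x y : Z * Z) : Z * Z := (x.1 - y.1, x.2 - y.2)%Z.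

Definition zrange (lo hi : Z) : seq Z :=
  [seq lo + Z.of_nat t | t <- iota 0 (Z.to_nat (hi - lo + 1))]%Z.

(* A range evaluator turns symbolic bounds [lo] and [hi] into the integer interval that
   must contain every value between them lying in [[-K, K]]. *)
Definition range_eval := Z * Z -> Z * Z -> Z * Z.

Definition range_exact (p K : Z) : range_eval := fun lo hi =>
  (Z.max (- K) (lo.1 * p + lo.2), Z.min K (hi.1 * p + hi.2))%Z.

(* Valid for every [p >= P0]. *)
Definition range_ge (P0 K : Z) : range_eval := fun lo hi =>
  (Z.max (- K) (if (0 <? lo.1)%Z then lo.1 * P0 + lo.2 else if (lo.1 <? 0)%Z then - K else lo.2),
   Z.min K (if (hi.1 <? 0)%Z then hi.1 * P0 + hi.2 else if (0 <? hi.1)%Z then K else hi.2))%Z.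

(* If [x] is the profile of a pair of windows [(v, w)], this list contains the profiles
   with length difference in [[-K, K]] of the pairs [(v', w')] desubstituting to [(v, w)]:
   [v'] starts at offset [r1] of [phi_p] of the first letter of [v] and stops at offset
   [r2] of [phi_p] of the letter following [v], similarly [w'] with [r3] and [r4], and
   [|v'| - |w'| = (p + 1) dL + dS + p dM + r2 - r1 - r4 + r3]. *)
Definition image_profiles (ev : range_eval) (x : profile) : seq profile :=
  let dL := (dlen x - dS x - dM x)%Z in
  let base := (dL + dM x, dL + dS x)%Z in
  flatten [seq flatten [seq flatten [seq flatten [seq
     let lo := zadd (zsub (zsub (zadd base o2.1.2) o1.2) o4.2) o3.1.2 in
     let hi := zadd (zsub (zsub (zadd base o2.2) o1.1.2) o4.1.2) o3.2 in
     let bounds := ev lo hi in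
     [seq Profile k (dL + dM x) (dS x) o1.1.1 o2.1.1 o3.1.1 o4.1.1 | k <- zrange bounds.1 bounds.2]
   | o4 <- block_offsets (next2 x)] | o3 <- block_offsets (head2 x)]
   | o2 <- block_offsets (next1 x)] | o1 <- block_offsets (head1 x)].

Definition letters := [:: L; S; M].

Definition short_windows : seq (nat * seq letter * letter) :=
  [seq (0, [::], e) | e <- letters] ++
  [seq (1, [:: a], e) | a <- letters, e <- letters] ++
  flatten [seq [seq (2, [:: a; b], e) | b <- letters, e <- letters] | a <- letters].

Definition zcount (a : letter) (s : seq letter) : Z := Z.of_nat (count_mem a s).

Definition window_pair_profile (w1 w2 : nat * seq letter * letter) : profile :=
  Profile (Z.of_nat w1.1.1 - Z.of_nat w2.1.1) (zcount S w1.1.2 - zcount S w2.1.2)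
          (zcount M w1.1.2 - zcount M w2.1.2)
          (head w1.2 w1.1.2) w1.2 (head w2.2 w2.1.2) w2.2.

Definition short_profiles : seq profile :=
  [seq window_pair_profile w1 w2 | w1 <- short_windows, w2 <- short_windows].

(* Only [certificate_ok] is trusted, so the search needs no correctness proof. *)
Definition saturate_step (acc : table * seq profile) (x : profile) :=
  if mem_table acc.1 x then acc else (table_add acc.1 x, x :: acc.2).

Fixpoint saturate (fuel : nat) (ev : range_eval) (T : table) (seen new : seq profile) :=
  if fuel is fuel'.+1 then
    let: (T', added) := foldl saturate_step (T, [::]) (flatten (map (image_profiles ev) new)) in
    if added is [::] then seen else saturate fuel' ev T' (added ++ seen) added
  else seen.

Definition reachable (ev : range_eval) : seq profile :=
  saturate 200 ev (table_of short_profiles) short_profiles short_profiles.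

(* At length difference [K], these bounds make [phi_p] of the first window at least
   [K + 2p] letters longer than [phi_p] of the second one. *)
Definition boundary_ok (P0 K : Z) (x : profile) : bool :=
  (if Z.eqb (dlen x) K then (dS x <=? K - 2)%Z && (dM x <=? P0 * (K - dS x - 2))%Z else true) &&
  (if Z.eqb (dlen x) (- K) then (- dS x <=? K - 2)%Z && (- dM x <=? P0 * (K + dS x - 2))%Z
   else true).

Definition balanced (x : profile) : bool :=
  if Z.eqb (dlen x) 0 then (- 2 <=? dM x)%Z && (dM x <=? 2)%Z else true.

Definition certificate_ok (ev : range_eval) (P0 K : Z) : bool :=
  let R := reachable ev in
  let T := table_of R in
  [&& all (fun x => all (mem_table T) (image_profiles ev x)) R, all (mem_table T) short_profiles,
      all (boundary_ok P0 K) R & all balanced R].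

Lemma zrange_mem lo hi k : (lo <= k <= hi)%Z -> k \in zrange lo hi.
Proof.
move=> hk; have -> : k = (lo + Z.of_nat (Z.to_nat (k - lo)))%Z by lia.
by apply: map_f; rewrite mem_iota add0n; lia.
Qed.

Definition range_sound (p K : Z) (ev : range_eval) := forall lo hi,
  ((ev lo hi).1 <= Z.max (- K) (lo.1 * p + lo.2) /\ Z.min K (hi.1 * p + hi.2) <= (ev lo hi).2)%Z.

Lemma range_exact_sound p K : range_sound p K (range_exact p K).
Proof. by move=> lo hi; rewrite /range_exact /=; lia. Qed.

Lemma range_ge_sound p P0 K : (0 <= P0 <= p)%Z -> range_sound p K (range_ge P0 K).
Proof.
move=> hP [a b] [c d]; rewrite /range_ge /=; split.
- case: (Z.ltb_spec 0 a) => /= ha.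
    by have : (a * P0 <= a * p)%Z by [nia]; lia.
  by case: (Z.ltb_spec a 0) => /= hb; nia.
- case: (Z.ltb_spec c 0) => /= hc.
    by have : (c * p <= c * P0)%Z by [nia]; lia.
  by case: (Z.ltb_spec 0 c) => /= hd; nia.
Qed.

Lemma certificate_okP ev P0 K : certificate_ok ev P0 K ->
  let T := table_of (reachable ev) in
  [/\ forall x, mem_table T x -> all (mem_table T) (image_profiles ev x),
      all (mem_table T) short_profiles,
      forall x, mem_table T x -> boundary_ok P0 K x
    & forall x, mem_table T x -> balanced x].
Proof.
case/and4P=> hclosed hshort hbound hbal; split => // x /mem_table_of hx.
- exact: (allP hclosed).
- exact: (allP hbound).
- exact: (allP hbal).
Qed.

Section Profiles.
Variable p : nat.
Hypothesis hp : 1 < p.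

Definition zocc a i n := Z.of_nat (occ a (factor p i n)).

Definition profile_of i n j n' : profile :=
  Profile (Z.of_nat n - Z.of_nat n') (zocc S i n - zocc S j n') (zocc M i n - zocc M j n')
          (u p i) (u p (i + n)) (u p j) (u p (j + n')).

Lemma short_window_in i n : n <= 2 -> (n, factor p i n, u p (i + n)) \in short_windows.
Proof.
case: n => [|[|[|n]]] // _; rewrite /factor /=.
- by rewrite addn0; case: (u p i).
- by rewrite addn0; move: (u p i) (u p (i + 1)) => [] [].
- by rewrite addn0 addn1; move: (u p i) (u p i.+1) (u p (i + 2)) => [] [] [].
Qed.

Lemma short_profile_in i n j n' : n <= 2 -> n' <= 2 -> profile_of i n j n' \in short_profiles.
Proof.
move=> hn hn'; have -> : profile_of i n j n' =
  window_pair_profile (n, factor p i n, u p (i + n)) (n', factor p j n', u p (j + n')).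
  have hd k l : head (u p (k + l)) (factor p k l) = u p k by case: l => [|l] /=; rewrite addn0.
  by rewrite /window_pair_profile /= !hd.
exact: (allpairs_f window_pair_profile (short_window_in i hn) (short_window_in j hn')).
Qed.

Lemma block_offsets_spec c r : r < size (phi p c) ->
  exists2 o, o \in block_offsets c & o.1.1 = nth L (phi p c) r /\
    (o.1.2.1 * Z.of_nat p + o.1.2.2 <= Z.of_nat r <= o.2.1 * Z.of_nat p + o.2.2)%Z.
Proof.
move=> hr; rewrite (nth_phi hp hr); move: hr; rewrite (size_phi hp).
case: c => /= hr; case: eqP => /= hr1.
- by exists (S, (1, 0), (1, 0))%Z; [rewrite !inE eqxx ?orbT | split => //; cbn [fst snd]; lia].
- by exists (L, (0, 0), (1, -1))%Z; [rewrite !inE eqxx ?orbT | split => //; cbn [fst snd]; lia].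
- by exists (M, (0, 0), (0, 0))%Z; [rewrite !inE eqxx ?orbT | split => //; cbn [fst snd]; lia].
- lia.
- by exists (S, (1, -1), (1, -1))%Z; [rewrite !inE eqxx ?orbT | split => //; cbn [fst snd]; lia].
- by exists (L, (0, 0), (1, -2))%Z; [rewrite !inE eqxx ?orbT | split => //; cbn [fst snd]; lia].
Qed.

Lemma image_profile_in ev K x r1 r2 r3 r4 k : range_sound (Z.of_nat p) K ev ->
  r1 < size (phi p (head1 x)) -> r2 < size (phi p (next1 x)) ->
  r3 < size (phi p (head2 x)) -> r4 < size (phi p (next2 x)) ->
  k = ((Z.of_nat p + 1) * (dlen x - dS x - dM x) + dS x + Z.of_nat p * dM x
       + Z.of_nat r2 - Z.of_nat r1 - Z.of_nat r4 + Z.of_nat r3)%Z ->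
  (- K <= k <= K)%Z ->
  Profile k (dlen x - dS x - dM x + dM x) (dS x) (nth L (phi p (head1 x)) r1)
    (nth L (phi p (next1 x)) r2) (nth L (phi p (head2 x)) r3) (nth L (phi p (next2 x)) r4)
  \in image_profiles ev x.
Proof.
move=> hev h1 h2 h3 h4 -> hk.
have [[[c1 [a1 b1]] [a1' b1']] i1 [/= <- r1b]] := block_offsets_spec h1.
have [[[c2 [a2 b2]] [a2' b2']] i2 [/= <- r2b]] := block_offsets_spec h2.
have [[[c3 [a3 b3]] [a3' b3']] i3 [/= <- r3b]] := block_offsets_spec h3.
have [[[c4 [a4 b4]] [a4' b4']] i4 [/= <- r4b]] := block_offsets_spec h4.
apply/flatten_mapP; exists (c1, (a1, b1), (a1', b1')) => //.
apply/flatten_mapP; exists (c2, (a2, b2), (a2', b2')) => //.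
apply/flatten_mapP; exists (c3, (a3, b3), (a3', b3')) => //.
apply/flatten_mapP; exists (c4, (a4, b4), (a4', b4')) => //.
apply: (map_f (fun k => Profile k _ _ _ _ _ _)); apply: zrange_mem.
set lo := zadd _ _; set hi := zadd _ _; have [hlo hhi] := hev lo hi.
move: hlo hhi; rewrite /lo /hi /zadd /zsub /=; lia.
Qed.

Lemma boundary_ok_swap P0 K i n j n' :
  boundary_ok P0 K (profile_of j n' i n) = boundary_ok P0 K (profile_of i n j n').
Proof.
rewrite /boundary_ok /= andbC; set k := (Z.of_nat n - Z.of_nat n')%Z.
set s := (zocc S i n - zocc S j n')%Z; set d := (zocc M i n - zocc M j n')%Z.
have -> : (Z.of_nat n' - Z.of_nat n = - k)%Z by rewrite /k; lia.
have -> : (zocc S j n' - zocc S i n = - s)%Z by rewrite /s; lia.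
have -> : (zocc M j n' - zocc M i n = - d)%Z by rewrite /d; lia.
rewrite !Z.opp_involutive Z.sub_opp_r.
congr andb.
- rewrite Z.add_opp_r; case: (Z.eqb_spec (- k) (- K)); case: (Z.eqb_spec k K) => // h1 h2; lia.
- by case: (Z.eqb_spec (- k) K); case: (Z.eqb_spec k (- K)) => // h1 h2; lia.
Qed.

Lemma boundary_gap P0 (K : nat) i j b : (0 <= P0 <= Z.of_nat p)%Z ->
  boundary_ok P0 (Z.of_nat K) (profile_of i (b + K) j b) ->
  size (phiw p (factor p j b)) + K + 2 * p <= size (phiw p (factor p i (b + K))).
Proof.
move=> hP0; rewrite /boundary_ok /= ifT; last by apply/Z.eqb_spec; lia.
case/andP=> /andP [/Z.leb_le hS /Z.leb_le hM] _.
have := occ_sum (factor p i (b + K)); have := occ_sum (factor p j b).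
rewrite !size_factor !(size_phiw hp) /occ; rewrite /zocc /occ in hS hM; nia.
Qed.

Section ImageWindows.
Variables (i n m a r1 r2 j n' m' b r3 r4 : nat).
Hypotheses (hi : at_offset p i m r1) (hin : at_offset p (i + n) (m + a) r2).
Hypotheses (hj : at_offset p j m' r3) (hjn : at_offset p (j + n') (m' + b) r4).

Lemma length_diff_image :
  (Z.of_nat n - Z.of_nat n' = let x := profile_of m a m' b in
    (Z.of_nat p + 1) * (dlen x - dS x - dM x) + dS x + Z.of_nat p * dM x
    + Z.of_nat r2 - Z.of_nat r1 - Z.of_nat r4 + Z.of_nat r3)%Z.
Proof.
have := size_desubst hp hi hin; have := size_desubst hp hj hjn.
have := occ_sum (factor p m a); have := occ_sum (factor p m' b).
rewrite !size_factor !(size_phiw hp) /= /zocc /occ.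
move: (count_mem L _) (count_mem S _) (count_mem M _).
move: (count_mem L _) (count_mem S _) (count_mem M _); lia.
Qed.

Lemma profile_of_image ev (K : nat) : range_sound (Z.of_nat p) (Z.of_nat K) ev ->
  n <= n' + K -> n' <= n + K ->
  profile_of i n j n' \in image_profiles ev (profile_of m a m' b).
Proof.
move=> hev hK hK'; have := length_diff_image; set x := profile_of m a m' b => hlen.
have -> : profile_of i n j n' = Profile (Z.of_nat n - Z.of_nat n') (dlen x - dS x - dM x + dM x)
    (dS x) (nth L (phi p (head1 x)) r1) (nth L (phi p (next1 x)) r2)
    (nth L (phi p (head2 x)) r3) (nth L (phi p (next2 x)) r4).
  case: (hi) (hin) (hj) (hjn) => [ei _] [ein _] [ej _] [ejn _].
  rewrite /x /profile_of /= /zocc (occ_desubst_S hp hi hin) (occ_desubst_S hp hj hjn).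
  rewrite (occ_desubst_M hp hi hin) (occ_desubst_M hp hj hjn) ein ejn ei ej.
  rewrite (u_img_pos hp hi.2) (u_img_pos hp hin.2) (u_img_pos hp hj.2) (u_img_pos hp hjn.2).
  congr Profile; have := occ_sum (factor p m a); have := occ_sum (factor p m' b).
  rewrite !size_factor /occ.
  move: (count_mem L _) (count_mem S _) (count_mem M _).
  move: (count_mem L _) (count_mem S _) (count_mem M _); lia.
apply: (image_profile_in (x := x) hev hi.2 hin.2 hj.2 hjn.2 hlen); lia.
Qed.

Lemma long_preimage_gap P0 (K : nat) : (0 <= P0 <= Z.of_nat p)%Z -> b + K < a ->
  boundary_ok P0 (Z.of_nat K) (profile_of m (b + K) m' b) -> n' + K < n.
Proof.
move=> hP0 hba /(boundary_gap hP0).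
have := size_desubst hp hi hin; have := size_desubst hp hj hjn.
rewrite -(subnKC (ltnW hba)) factorD phiw_cat size_cat.
have := size_phiw_ge hp (factor p (m + (b + K)) (a - (b + K))); rewrite size_factor.
have := size_phi_le hp (u p m); have := size_phi_le hp (u p (m' + b)).
case: hi hjn => _ hr1 [_ hr4]; move: (size (phi _ _)) (size (phi _ _)) hr1 hr4.
move: (size (phiw _ _)) (size (phiw _ _)) (size (phiw _ _)); lia.
Qed.

End ImageWindows.

Section Soundness.
Variables (K : nat) (ev : range_eval) (P0 : Z) (T : table).
Hypothesis ev_sound : range_sound (Z.of_nat p) (Z.of_nat K) ev.
Hypothesis P0_le : (0 <= P0 <= Z.of_nat p)%Z.
Hypothesis T_closed : forall x, mem_table T x -> all (mem_table T) (image_profiles ev x).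
Hypothesis T_short : all (mem_table T) short_profiles.
Hypothesis T_boundary : forall x, mem_table T x -> boundary_ok P0 (Z.of_nat K) x.

Lemma profile_of_in_table N0 i n j n' : n <= N0 -> n' <= N0 -> n <= n' + K -> n' <= n + K ->
  mem_table T (profile_of i n j n').
Proof.
elim: N0 => [|N0 IH] in i n j n' *.
  by move=> hn hn' _ _; apply: (allP T_short); apply: short_profile_in; lia.
move=> hn hn' hK hK'.
have [short | long] := boolP ((n <= 2) && (n' <= 2)).
  by case/andP: short => hn2 hn2'; apply: (allP T_short); apply: short_profile_in.
have [m [r1 [a [r2 [hi hin]]]]] := window_decomp hp i n.
have [m' [r3 [b [r4 [hj hjn]]]]] := window_decomp hp j n'.
have [ha ha'] := desubst_length hp hi hin; have [hb hb'] := desubst_length hp hj hjn.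
have {}ha : a <= N0 by lia.
have {}hb : b <= N0 by lia.
case: (ltnP (b + K) a) => [hba|hab].
  have : boundary_ok P0 (Z.of_nat K) (profile_of m (b + K) m' b) by apply/T_boundary/IH; lia.
  by move/(long_preimage_gap hi hin hj hjn P0_le hba); lia.
case: (ltnP (a + K) b) => [hab'|hba].
  have : boundary_ok P0 (Z.of_nat K) (profile_of m a m' (a + K)) by apply/T_boundary/IH; lia.
  by rewrite -boundary_ok_swap => /(long_preimage_gap hj hjn hi hin P0_le hab'); lia.
apply: (allP (T_closed (IH m a m' b ha hb hab hba))).
exact: (profile_of_image hi hin hj hjn ev_sound hK hK').
Qed.

End Soundness.

Lemma certificate_balance ev P0 (K : nat) i j n :
  certificate_ok ev P0 (Z.of_nat K) -> range_sound (Z.of_nat p) (Z.of_nat K) ev ->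
  (0 <= P0 <= Z.of_nat p)%Z ->
  occ M (factor p i n) <= occ M (factor p j n) + 2 /\
  occ M (factor p j n) <= occ M (factor p i n) + 2.
Proof.
move=> /certificate_okP [closed short boundary bal] hev hP0.
have := bal _ (profile_of_in_table hev hP0 closed short boundary i j (leqnn n) (leqnn n)
                 (leq_addr _ _) (leq_addr _ _)).
rewrite /balanced /= ifT; last by apply/Z.eqb_spec; lia.
by case/andP => /Z.leb_le h1 /Z.leb_le h2; rewrite /zocc in h1 h2; lia.
Qed.

End Profiles.

Lemma certificate_p2 : certificate_ok (range_exact 2 7) 2 7.
Proof. by vm_compute. Qed.

Lemma certificate_p_ge3 : certificate_ok (range_ge 3 7) 3 7.
Proof. by vm_compute. Qed.

Theorem theorem4p1 (p : nat) (hp : 1 < p) (i j n : nat) :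
  occ M (factor p i n) <= occ M (factor p j n) + 2 /\
  occ M (factor p j n) <= occ M (factor p i n) + 2.
Proof.
have [p2 | p_ge3] : p = 2 \/ 2 < p by lia.
  subst p; apply: (certificate_balance hp (K := 7) (P0 := 2)).
  - exact: certificate_p2.
  - exact: range_exact_sound.
  - lia.
apply: (certificate_balance hp (K := 7) (P0 := 3)).
- exact: certificate_p_ge3.
- by apply: range_ge_sound; lia.
- lia.
Qed.
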